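(* Let $N\ge 1$ and $-\infty<a_i\le b_i<\infty$ with $r_i=(b_i-a_i)/2>0$ for all $i$; set $m_i=(a_i+b_i)/2$, $\Theta=\prod_{i=1}^N[a_i,b_i]$, $T(y)=\sum_{i=1}^N y_i$. Let $0<n<N$ and \[ V_n=\min_{0<\pi_i\le 1,\ \sum_{i=1}^N\pi_i\le n}\ \sum_{i=1}^N r_i^2\,\frac{1-\pi_i}{\pi_i}. \] Then, taking the infimum over all pairs $(p,\delta)$ where $p$ is a sampling design with $\pi_i=\mathbb P_p(i\in S)>0$ for all $i$ and $\mathbb E_p[|S|]\le n$, and $\delta$ is an unbiased estimator for $p$, \[ \inf_{p,\delta}\sup_{y\in\Theta}R(\delta,p;y)=V_n . \] Moreover, $V_n$ is attained by sampling each unit independently with inclusion probabilities $\pi_i^*=\min(1,c\,r_i)$, where $c>0$ is chosen so that $\sum_{i=1}^N\pi_i^*=n$, and using the estimator $\widehat T(y_S)=\sum_{i=1}^N m_i+\sum_{i\in S}\frac{y_i-m_i}{\pi_i^*}$.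
   Context: A sampling design is a probability distribution $p$ on the subsets $s\subseteq\{1,\dots,N\}$; $S$ denotes the random sample drawn from $p$, $\mathbb P_p$ and $\mathbb E_p$ denote probability and expectation with respect to $p$. An estimator $\delta$ is a collection of measurable functions $\delta_s:\Theta_s\to\mathbb R$, one for each subset $s$, where $\Theta_s=\prod_{i\in s}[a_i,b_i]$; for $y\in\Theta$ write $y_s=(y_i)_{i\in s}$. The estimator is unbiased if $\mathbb E_p[\delta_S(y_S)]=T(y)$ for all $y\in\Theta$. The risk is $R(\delta,p;y)=\mathbb E_p[(\delta_S(y_S)-T(y))^2]$. *)

From HB Require Import structures.
From mathcomp Require Import all_boot all_order all_algebra.
From mathcomp Require Import all_classical all_reals all_analysis.
Set Implicit Arguments. Unset Strict Implicit. Unset Printing Implicit Defensive.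
Import Order.TTheory GRing.Theory Num.Theory.
Local Open Scope classical_set_scope.
Local Open Scope ring_scope.

Section Sampling.
Variables (R : realType) (N : nat).

Definition Theta (a b : 'I_N -> R) : set ('I_N -> R) :=
  [set y | forall i, a i <= y i <= b i].

Definition total (y : 'I_N -> R) : R := \sum_(i < N) y i.

Definition is_design (p : {ffun {set 'I_N} -> R}) : Prop :=
  (forall s, 0 <= p s) /\ \sum_(s : {set 'I_N}) p s = 1.

Definition incl_prob (p : {ffun {set 'I_N} -> R}) (i : 'I_N) : R :=
  \sum_(s : {set 'I_N} | i \in s) p s.

Definition exp_size (p : {ffun {set 'I_N} -> R}) : R :=
  \sum_(s : {set 'I_N}) p s * (#|s|)%:R.

(* An estimator delta = (delta_s)_s with delta_s : Theta_s -> R is encoded as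
   a family delta s : ('I_N -> R) -> R that depends only on the coordinates
   y_i, i in s (i.e. delta s y = delta_s (y_s)). *)
Definition estimator_fam := {set 'I_N} -> ('I_N -> R) -> R.

Definition local (delta : estimator_fam) : Prop :=
  forall (s : {set 'I_N}) (y y' : 'I_N -> R), (forall i, i \in s -> y i = y' i) ->
    delta s y = delta s y'.

(* Borel (= product) sigma-algebra on R^N, generated by coordinate cylinders *)
Definition cylinders : set (set ('I_N -> R)) :=
  [set C | exists i (A : set R), measurable A /\ C = [set y | A (y i)]].

Definition RN_measurable : set (set ('I_N -> R)) := <<s cylinders >>.

Definition is_estimator (a b : 'I_N -> R) (delta : estimator_fam) : Prop :=
  local delta /\
  forall (s : {set 'I_N}) (B : set R), measurable B ->
    RN_measurable (Theta a b `&` (delta s) @^-1` B).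

Definition unbiased (a b : 'I_N -> R) (p : {ffun {set 'I_N} -> R})
  (delta : estimator_fam) : Prop :=
  forall y, Theta a b y -> \sum_(s : {set 'I_N}) p s * delta s y = total y.

Definition risk (p : {ffun {set 'I_N} -> R}) (delta : estimator_fam)
  (y : 'I_N -> R) : R :=
  \sum_(s : {set 'I_N}) p s * (delta s y - total y) ^+ 2.

Definition max_risk (a b : 'I_N -> R) (p : {ffun {set 'I_N} -> R})
  (delta : estimator_fam) : \bar R :=
  ereal_sup [set (risk p delta y)%:E | y in Theta a b].

Definition admissible (a b : 'I_N -> R) (n : R) (p : {ffun {set 'I_N} -> R})
  (delta : estimator_fam) : Prop :=
  [/\ is_design p, forall i, 0 < incl_prob p i, exp_size p <= n,
      is_estimator a b delta & unbiased a b p delta].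

Definition minimax_value (a b : 'I_N -> R) (n : R) : \bar R :=
  ereal_inf [set max_risk a b pd.1 pd.2 | pd in
              [set pd : {ffun {set 'I_N} -> R} * estimator_fam |
                 admissible a b n pd.1 pd.2]].

Definition half_range (a b : 'I_N -> R) (i : 'I_N) : R := (b i - a i) / 2.
Definition midpoint (a b : 'I_N -> R) (i : 'I_N) : R := (a i + b i) / 2.

Definition Vn (a b : 'I_N -> R) (n : R) : \bar R :=
  ereal_inf [set (\sum_(i < N) half_range a b i ^+ 2 * (1 - pi i) / pi i)%:E
             | pi in [set pi : 'I_N -> R |
                        (forall i, 0 < pi i <= 1) /\ \sum_(i < N) pi i <= n]].

Definition poisson_design (pi : 'I_N -> R) : {ffun {set 'I_N} -> R} :=
  [ffun s : {set 'I_N} => \prod_(i in s) pi i * \prod_(i in ~: s) (1 - pi i)].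

Definition diff_estimator (m pi : 'I_N -> R) : estimator_fam :=
  fun s y => \sum_(i < N) m i + \sum_(i in s) (y i - m i) / pi i.

End Sampling.

From Pilot Require Import Defs.
From HB Require Import structures.
From mathcomp Require Import all_boot all_order all_algebra.
From mathcomp Require Import all_classical all_reals all_analysis.
From mathcomp Require Import measurable_realfun measurable_fun_approximation.
From mathcomp Require Import ring lra.
Set Implicit Arguments. Unset Strict Implicit. Unset Printing Implicit Defensive.
Import Order.TTheory GRing.Theory Num.Theory.
Import numFieldNormedType.Exports.
Local Open Scope classical_set_scope.
Local Open Scope ring_scope.

(* Upper bound: under Poisson sampling with inclusion probabilities pi, the difference
   estimator has risk sum_i (y_i - m_i)^2 (1 - pi_i) / pi_i, which is largest at a corner of
   Theta, and a Lagrangian argument shows that pi_i = min(1, c r_i) minimises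
   sum_i r_i^2 (1 - pi_i) / pi_i under sum_i pi_i <= n.
   Lower bound: average the risk of any unbiased (p, delta) over the uniform prior on the
   2^N corners m +- r. The corner signs are orthonormal for this prior; by locality delta_S
   has no component on the sign of a unit outside S, and by unbiasedness the components on
   the sign of unit i average to r_i over p. Bessel's inequality and Cauchy-Schwarz then
   bound the Bayes risk, hence the maximal risk, below by sum_i r_i^2 (1 - pi_i) / pi_i,
   which is at least V_n. *)

Section Orthogonal.
Variables (R : realFieldType) (T I : finType).

Lemma sum_orth_coef (u : T -> R) (phi : I -> T -> R) (gam x : I -> R) i :
  (forall i j, \sum_t u t * (phi i t * phi j t) = (i == j)%:R * gam i) ->
  \sum_t u t * (phi i t * \sum_j x j * phi j t) = x i * gam i.
Proof.
move=> orth.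
have expand t : u t * (phi i t * \sum_j x j * phi j t) =
    \sum_j x j * (u t * (phi i t * phi j t)).
  by rewrite !mulr_sumr; apply: eq_bigr => j _; ring.
rewrite (eq_bigr _ (fun t _ => expand t)) exchange_big /=.
under eq_bigr do rewrite -mulr_sumr orth.
rewrite (bigD1 i) //= eqxx mul1r big1 ?addr0 // => j ji.
by rewrite eq_sym (negbTE ji) mul0r mulr0.
Qed.

Lemma sum_sqr_orth (u : T -> R) (phi : I -> T -> R) (gam x : I -> R) :
  (forall i j, \sum_t u t * (phi i t * phi j t) = (i == j)%:R * gam i) ->
  \sum_t u t * (\sum_i x i * phi i t) ^+ 2 = \sum_i x i ^+ 2 * gam i.
Proof.
move=> orth.
have expand t : u t * (\sum_i x i * phi i t) ^+ 2 =
    \sum_i x i * (u t * (phi i t * \sum_j x j * phi j t)).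
  by rewrite expr2 mulr_suml mulr_sumr; apply: eq_bigr => i _; ring.
rewrite (eq_bigr _ (fun t _ => expand t)) exchange_big; apply: eq_bigr => i _.
by rewrite -mulr_sumr (sum_orth_coef _ _ orth) mulrA -expr2.
Qed.

Lemma bessel (u : T -> R) (phi : I -> T -> R) (f : T -> R) :
  (forall t, 0 <= u t) ->
  (forall i j, \sum_t u t * (phi i t * phi j t) = (i == j)%:R) ->
  \sum_i (\sum_t u t * (f t * phi i t)) ^+ 2 <= \sum_t u t * f t ^+ 2.
Proof.
move=> u_ge0 orth.
pose g i := \sum_t u t * (f t * phi i t).
have orth1 i j : \sum_t u t * (phi i t * phi j t) = (i == j)%:R * 1.
  by rewrite orth mulr1.
have residual_ge0 : 0 <= \sum_t u t * (f t - \sum_i g i * phi i t) ^+ 2.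
  by apply: sumr_ge0 => t _; rewrite mulr_ge0 ?sqr_ge0.
have expand t : u t * (f t - \sum_i g i * phi i t) ^+ 2 = u t * f t ^+ 2
    - 2 * \sum_i g i * (u t * (f t * phi i t)) + u t * (\sum_i g i * phi i t) ^+ 2.
  rewrite [X in _ - 2 * X](_ : _ = u t * f t * \sum_i g i * phi i t); first by ring.
  by rewrite mulr_sumr; apply: eq_bigr => i _; ring.
move: residual_ge0; rewrite (eq_bigr _ (fun t _ => expand t)) !big_split /=.
rewrite sumrN -mulr_sumr exchange_big /= (sum_sqr_orth _ orth1).
under [X in _ + X]eq_bigr do rewrite mulr1.
under [X in 2 * X]eq_bigr do rewrite -mulr_sumr -/(g _) -expr2.
lra.
Qed.

End Orthogonal.

Lemma exists_ge_average (R : realFieldType) (T : finType) (u f : T -> R) :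
  (forall t, 0 <= u t) -> \sum_t u t = 1 -> exists t, \sum_t u t * f t <= f t.
Proof.
move=> u_ge0 u_sum1; case: (pickP (@predT T)) => [t0 _|T0]; last first.
  by move: u_sum1; rewrite big_pred0 // => /eqP; rewrite eq_sym oner_eq0.
case: (@arg_maxP _ _ _ t0 predT f isT) => t _ t_max.
exists t; rewrite -[leRHS]mul1r -u_sum1 mulr_suml.
by apply: ler_sum => s _; apply: ler_wpM2l; [apply: u_ge0|apply: t_max].
Qed.

Section Designs.
Variables (R : realType) (N : nat).
Implicit Types (s : {set 'I_N}) (p : {ffun {set 'I_N} -> R}).

Definition ind (i : 'I_N) s : R := (i \in s)%:R.

Lemma ind_sqr i s : ind i s ^+ 2 = ind i s.
Proof. by rewrite /ind; case: (i \in s); rewrite ?expr1n ?expr0n. Qed.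

Lemma incl_probE p i : incl_prob p i = \sum_s p s * ind i s.
Proof.
rewrite /incl_prob big_mkcond /=; apply: eq_bigr => s _.
by rewrite /ind; case: (i \in s); rewrite ?mulr1 ?mulr0.
Qed.

Lemma exp_sizeE p : exp_size p = \sum_i incl_prob p i.
Proof.
have card_ind s : #|s|%:R = \sum_i ind i s :> R.
  rewrite -sum1_card natr_sum big_mkcond.
  by apply: eq_bigr => i _; rewrite /ind; case: (i \in s).
rewrite /exp_size; under eq_bigr do rewrite card_ind mulr_sumr.
by rewrite exchange_big; apply: eq_bigr => i _; rewrite incl_probE.
Qed.

Lemma incl_prob_le1 p i : is_design p -> incl_prob p i <= 1.
Proof.
move=> [p_ge0 <-]; rewrite incl_probE; apply: ler_sum => s _.
by rewrite ler_piMr // /ind lern1 leq_b1.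
Qed.

(* Completing the square around [r / pi_i]: Cauchy-Schwarz on the samples containing i. *)
Lemma design_second_moment_ge p i (x : {set 'I_N} -> R) (r : R) :
  is_design p -> 0 < incl_prob p i -> (forall s, i \notin s -> x s = 0) ->
  \sum_s p s * x s = r ->
  r ^+ 2 * (1 - incl_prob p i) / incl_prob p i <= \sum_s p s * (x s - r) ^+ 2.
Proof.
move=> [p_ge0 p_sum1] pi_gt0 x_out x_mean.
set q := r / incl_prob p i.
have expand s : p s * (x s - r) ^+ 2 = p s * (x s - q * ind i s) ^+ 2
    + (2 * q - 2 * r) * (p s * x s) + r ^+ 2 * p s - q ^+ 2 * (p s * ind i s).
  by rewrite /ind; case: (boolP (i \in s)) => [_|/x_out ->] /=; ring.
rewrite (eq_bigr _ (fun s _ => expand s)) !big_split /= sumrN -!mulr_sumr.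
rewrite x_mean p_sum1 -incl_probE.
have rest : (2 * q - 2 * r) * r + r ^+ 2 * 1 - q ^+ 2 * incl_prob p i =
            r ^+ 2 * (1 - incl_prob p i) / incl_prob p i.
  by rewrite /q; field; rewrite gt_eqF.
have : 0 <= \sum_s p s * (x s - q * ind i s) ^+ 2.
  by apply: sumr_ge0 => s _; rewrite mulr_ge0 ?sqr_ge0.
lra.
Qed.

End Designs.
Arguments ind {R N}.

Section Poisson.
Variables (R : realType) (N : nat).
Implicit Types (pi : 'I_N -> R) (s A : {set 'I_N}).

Lemma poisson_designE pi s :
  poisson_design pi s = \prod_i (if i \in s then pi i else 1 - pi i).
Proof.
rewrite ffunE [RHS](bigID (mem s)) /=.
congr (_ * _); apply: eq_big => i; rewrite ?inE //; first by move->.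
by move/negbTE->.
Qed.

Lemma poisson_design_ge0 pi s : (forall i, 0 <= pi i <= 1) -> 0 <= poisson_design pi s.
Proof.
move=> pi01; rewrite poisson_designE; apply: prodr_ge0 => i _.
by have /andP[pi_ge0 pi_le1] := pi01 i; case: ifP; rewrite ?subr_ge0.
Qed.

Lemma poisson_design_subset pi A :
  \sum_s poisson_design pi s * (A \subset s)%:R = \prod_(i in A) pi i.
Proof.
pose q i := if i \in A then 0 else 1 - pi i.
transitivity (\sum_(s : {set 'I_N}) \prod_(i < N) (if i \in s then pi i else q i)).
  apply: eq_bigr => s _; rewrite poisson_designE /q.
  have [/fintype.subsetP As|/fintype.subsetPn[j jA js]] := boolP (A \subset s).
    rewrite mulr1; apply: eq_bigr => i _; case: ifP => // /negbT iNs.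
    by case: ifP => // /As; rewrite (negbTE iNs).
  by rewrite mulr0 (bigD1 j) //= (negbTE js) jA mul0r.
transitivity (\prod_(i < N) (pi i + q i)); first by rewrite bigA_distr.
rewrite (bigID (mem A)) /= [X in _ * X]big1 ?mulr1 => [|i /negbTE iNA].
  by apply: eq_bigr => i iA; rewrite /q iA addr0.
by rewrite /q iNA addrC subrK.
Qed.

Lemma poisson_design_sum1 pi : \sum_s poisson_design pi s = 1.
Proof.
rewrite -[RHS](big_set0 1 *%R pi) -poisson_design_subset.
by apply: eq_bigr => s _; rewrite finset.sub0set mulr1.
Qed.

Lemma poisson_design_ind pi i : \sum_s poisson_design pi s * ind i s = pi i.
Proof.
rewrite -(@big_set1 _ 1 *%R _ i pi) -poisson_design_subset.
by apply: eq_bigr => s _; rewrite finset.sub1set.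
Qed.

Lemma poisson_design_ind2 pi i j : i != j ->
  \sum_s poisson_design pi s * (ind i s * ind j s) = pi i * pi j.
Proof.
move=> ij; rewrite -(@big_set1 _ 1 *%R _ j pi) -big_setU1 ?inE //= -poisson_design_subset.
apply: eq_bigr => s _; rewrite finset.subUset !finset.sub1set /ind.
by case: (i \in s); case: (j \in s); rewrite ?mulr1 ?mulr0.
Qed.

Lemma poisson_design_centered pi i : \sum_s poisson_design pi s * (ind i s - pi i) = 0.
Proof.
under eq_bigr do rewrite mulrBr.
by rewrite sumrB poisson_design_ind -mulr_suml poisson_design_sum1 mul1r subrr.
Qed.

Lemma poisson_design_cov pi i j :
  \sum_s poisson_design pi s * ((ind i s - pi i) * (ind j s - pi j)) =
  (i == j)%:R * (pi i * (1 - pi i)).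
Proof.
have expand s : poisson_design pi s * ((ind i s - pi i) * (ind j s - pi j)) =
    poisson_design pi s * (ind i s * ind j s) - pi j * (poisson_design pi s * ind i s)
    - pi i * (poisson_design pi s * ind j s) + pi i * pi j * poisson_design pi s.
  by ring.
rewrite (eq_bigr _ (fun s _ => expand s)) !big_split /= !sumrN -!mulr_sumr.
rewrite !poisson_design_ind poisson_design_sum1 mulr1; have [<-|ij] := eqVneq i j.
  under eq_bigr do rewrite -expr2 ind_sqr.
  by rewrite poisson_design_ind mul1r; ring.
by rewrite poisson_design_ind2 // mul0r; ring.
Qed.

Lemma poisson_design_is_design pi :
  (forall i, 0 <= pi i <= 1) -> is_design (poisson_design pi).
Proof.
by move=> pi01; split=> [s|]; rewrite ?poisson_design_ge0 ?poisson_design_sum1.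
Qed.

Lemma incl_prob_poisson pi i : incl_prob (poisson_design pi) i = pi i.
Proof. by rewrite incl_probE poisson_design_ind. Qed.

Lemma exp_size_poisson pi : exp_size (poisson_design pi) = \sum_i pi i.
Proof. by rewrite exp_sizeE; under eq_bigr do rewrite incl_prob_poisson. Qed.

End Poisson.

Section DifferenceEstimator.
Variables (R : realType) (N : nat) (m pi : 'I_N -> R).
Hypothesis pi_neq0 : forall i, pi i != 0.

Lemma diff_estimator_err s y :
  diff_estimator m pi s y - Defs.total y = \sum_i (y i - m i) / pi i * (ind i s - pi i).
Proof.
have split_term i : (y i - m i) / pi i * (ind i s - pi i) =
    (if i \in s then (y i - m i) / pi i else 0) - (y i - m i).
  by rewrite /ind; case: (i \in s) => /=; field.
rewrite (eq_bigr _ (fun i _ => split_term i)) sumrB -big_mkcond sumrB.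
by rewrite /diff_estimator /Defs.total; ring.
Qed.

Lemma diff_estimator_unbiased y :
  \sum_s poisson_design pi s * diff_estimator m pi s y = Defs.total y.
Proof.
have split_err s : poisson_design pi s * diff_estimator m pi s y =
    \sum_i (y i - m i) / pi i * (poisson_design pi s * (ind i s - pi i))
    + poisson_design pi s * Defs.total y.
  rewrite -[diff_estimator _ _ _ _](subrK (Defs.total y)).
  rewrite diff_estimator_err mulrDr mulr_sumr; congr (_ + _).
  by apply: eq_bigr => i _; ring.
rewrite (eq_bigr _ (fun s _ => split_err s)) big_split /= -mulr_suml poisson_design_sum1 mul1r.
by rewrite exchange_big big1 ?add0r // => i _; rewrite -mulr_sumr poisson_design_centered mulr0.
Qed.

Lemma risk_diff_estimator y :
  risk (poisson_design pi) (diff_estimator m pi) y =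
  \sum_i (y i - m i) ^+ 2 * (1 - pi i) / pi i.
Proof.
rewrite /risk; under eq_bigr do rewrite diff_estimator_err.
rewrite (sum_sqr_orth _ (poisson_design_cov pi)); apply: eq_bigr => i _.
by field.
Qed.

End DifferenceEstimator.

Lemma max_risk_diff_estimator (R : realType) (N : nat) (a b pi : 'I_N -> R) :
  (forall i, a i <= b i) -> (forall i, 0 < pi i <= 1) ->
  max_risk a b (poisson_design pi) (diff_estimator (midpoint a b) pi) =
  (\sum_i half_range a b i ^+ 2 * (1 - pi i) / pi i)%:E.
Proof.
move=> ab pi01; have pi_neq0 i : pi i != 0 by case/andP: (pi01 i) => pi_gt0 _; rewrite gt_eqF.
apply/le_anti/andP; split.
  apply: ge_ereal_sup => _ [y y_in <-]; rewrite lee_fin risk_diff_estimator //.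
  apply: ler_sum => i _; have /andP[pi_gt0 pi_le1] := pi01 i.
  apply: ler_wpM2r; first by rewrite invr_ge0 ltW.
  apply: ler_wpM2r; first by rewrite subr_ge0.
  have /andP[ay yb] := y_in i; rewrite /midpoint /half_range; nra.
apply: ereal_sup_ubound; exists b => [i|]; first by rewrite ab lexx.
rewrite risk_diff_estimator //; congr (_%:E); apply: eq_bigr => i _.
by rewrite /midpoint /half_range; congr (_ ^+ 2 * _ / _); field.
Qed.

Section Measurability.
Variables (R : realType) (N : nat).
Let RN := g_sigma_algebraType (@cylinders R N).

Lemma measurable_coord (i : 'I_N) : measurable_fun (setT : set RN) (fun y : RN => y i).
Proof.
by move=> _ A mA; rewrite setTI; apply: sub_sigma_algebra; exists i, A.
Qed.

Lemma measurable_Theta (a b : 'I_N -> R) : measurable (Theta a b : set RN).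
Proof.
have -> : Theta a b = \bigcap_(i in [set: 'I_N]) [set y : RN | `[a i, b i]%classic (y i)].
  apply/seteqP; split=> y /= y_in i; first by move=> _; rewrite /= in_itv y_in.
  by have := y_in i Logic.I; rewrite /= in_itv.
apply: fin_bigcap_measurable; first exact: finite_finset.
by move=> i _; apply: sub_sigma_algebra; exists i, `[a i, b i]%classic.
Qed.

Lemma diff_estimator_is_estimator (a b m pi : 'I_N -> R) :
  is_estimator a b (diff_estimator m pi).
Proof.
split=> [s y y' eq_y|s B mB].
  by rewrite /diff_estimator; congr (_ + _); apply: eq_bigr => i /eq_y ->.
have affine : diff_estimator m pi s = fun y : RN =>
    \sum_i (y i * (if i \in s then (pi i)^-1 else 0) + (if i \in s then - m i / pi i else 0))
    + \sum_i m i.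
  apply: funext => y; rewrite /diff_estimator addrC big_mkcond /=; congr (_ + _).
  by apply: eq_bigr => i _; case: (i \in s); rewrite ?mulr0 ?addr0 // mulrBl mulNr.
have m_est : measurable_fun (setT : set RN) (diff_estimator m pi s).
  rewrite affine; apply: measurable_funD => //; apply: measurable_sum => i.
  by apply: measurable_funD => //; apply: measurable_funM => //; apply: measurable_coord.
by have := m_est measurableT B mB; rewrite setTI; apply: measurableI; apply: measurable_Theta.
Qed.

End Measurability.

Section Allocation.
Variable R : realFieldType.

Lemma min1_gt0_le1 (x : R) : 0 < x -> 0 < Num.min 1 x <= 1.
Proof. by move=> x_gt0; rewrite lt_min ltr01 x_gt0 ge_min lexx. Qed.

(* The constraint sum_i pi_i <= n enters with Lagrange multiplier 1 / c^2. *)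
Lemma lagrangian_min_allocation (c r x : R) : 0 < c -> 0 < r -> 0 < x <= 1 ->
  r ^+ 2 * (1 - Num.min 1 (c * r)) / Num.min 1 (c * r) + Num.min 1 (c * r) / c ^+ 2
  <= r ^+ 2 * (1 - x) / x + x / c ^+ 2.
Proof.
move=> c_gt0 r_gt0 /andP[x_gt0 x_le1]; rewrite -subr_ge0.
have c2_gt0 : 0 < x * c ^+ 2 by rewrite mulr_gt0 ?exprn_gt0.
have [cr_ge1|cr_lt1] := leP 1 (c * r).
  have -> : r ^+ 2 * (1 - x) / x + x / c ^+ 2 - (r ^+ 2 * (1 - 1) / 1 + 1 / c ^+ 2)
      = (1 - x) * ((c * r) ^+ 2 - x) / (x * c ^+ 2).
    by field; rewrite !gt_eqF.
  apply: divr_ge0; last exact: ltW.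
  by apply: mulr_ge0; rewrite subr_ge0 //; nra.
have -> : r ^+ 2 * (1 - x) / x + x / c ^+ 2 - (r ^+ 2 * (1 - c * r) / (c * r) + c * r / c ^+ 2)
    = (c * r - x) ^+ 2 / (x * c ^+ 2).
  by field; rewrite !gt_eqF.
by apply: divr_ge0; rewrite ?sqr_ge0 ?ltW.
Qed.

Variable N : nat.

Lemma min_allocation_minimizes_cost (r : 'I_N -> R) (c n : R) (pi : 'I_N -> R) :
  (forall i, 0 < r i) -> 0 < c -> \sum_i Num.min 1 (c * r i) = n ->
  (forall i, 0 < pi i <= 1) -> \sum_i pi i <= n ->
  \sum_i r i ^+ 2 * (1 - Num.min 1 (c * r i)) / Num.min 1 (c * r i)
  <= \sum_i r i ^+ 2 * (1 - pi i) / pi i.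
Proof.
move=> r_gt0 c_gt0 sum_min pi01 sum_pi.
have : \sum_i (r i ^+ 2 * (1 - Num.min 1 (c * r i)) / Num.min 1 (c * r i)
                + Num.min 1 (c * r i) / c ^+ 2)
       <= \sum_i (r i ^+ 2 * (1 - pi i) / pi i + pi i / c ^+ 2).
  by apply: ler_sum => i _; apply: lagrangian_min_allocation.
rewrite !big_split /= -!mulr_suml sum_min.
have : \sum_i pi i / c ^+ 2 <= n / c ^+ 2.
  by rewrite -mulr_suml ler_wpM2r // invr_ge0 exprn_ge0 ?ltW.
rewrite -mulr_suml; lra.
Qed.

End Allocation.

Lemma VnE (R : realType) (N : nat) (a b : 'I_N -> R) (c n : R) :
  (forall i, 0 < half_range a b i) -> 0 < c ->
  \sum_i Num.min 1 (c * half_range a b i) = n ->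
  Vn a b n = (\sum_i half_range a b i ^+ 2 * (1 - Num.min 1 (c * half_range a b i))
                / Num.min 1 (c * half_range a b i))%:E.
Proof.
move=> r_gt0 c_gt0 sum_min; apply/le_anti/andP; split.
  apply: ereal_inf_lbound; exists (fun i => Num.min 1 (c * half_range a b i)) => //.
  by split=> [i|]; [apply: min1_gt0_le1; rewrite mulr_gt0|rewrite sum_min].
apply: le_ereal_inf_tmp => _ [pi [pi01 sum_pi] <-]; rewrite lee_fin.
exact: (min_allocation_minimizes_cost r_gt0 c_gt0 sum_min pi01 sum_pi).
Qed.

Lemma exists_allocation_scale (R : realType) (N : nat) (r : 'I_N -> R) (n : nat) :
  (forall i, 0 < r i) -> (0 < n < N)%N ->
  exists2 c : R, 0 < c & \sum_i Num.min 1 (c * r i) = n%:R.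
Proof.
move=> r_gt0 /andP[n_gt0 n_lt_N].
pose f c := \sum_i Num.min 1 (c * r i).
pose C := \sum_i (r i)^-1.
have C_ge0 : 0 <= C by apply: sumr_ge0 => i _; rewrite invr_ge0 ltW.
have f0 : f 0 = 0 by apply: big1 => i _; rewrite mul0r; apply/min_idPr.
have fC : f C = N%:R.
  rewrite /f (eq_bigr (fun=> 1)) ?sumr_const ?card_ord // => i _; apply/min_idPl.
  have : (r i)^-1 <= C.
    by rewrite /C (bigD1 i) //= lerDl; apply: sumr_ge0 => j _; rewrite invr_ge0 ltW.
  by rewrite -(ler_pM2r (r_gt0 i)) mulVf ?gt_eqF.
have f_cont : {within `[0, C], continuous f}.
  apply: continuous_subspaceT; rewrite /f.
  apply: (@continuous_big _ _ +%R 0 predT add_continuous) => i _ x.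
  have := @continuous_min R R (fun=> 1) (fun c => c * r i) x; apply.
    exact: cst_continuous.
  exact: mulrr_continuous.
have n_between : Num.min (f 0) (f C) <= n%:R <= Num.max (f 0) (f C).
  by rewrite f0 fC min_l ?max_r ?ler0n //= ler_nat ltnW.
have [c c_in fc] := IVT C_ge0 f_cont n_between.
move: c_in; rewrite in_itv /= => /andP[c_ge0 _].
exists c => //; rewrite lt_def c_ge0 andbT; apply/eqP => c0.
by move: fc; rewrite c0 f0 => /esym/eqP; rewrite pnatr_eq0 => /eqP n0; rewrite n0 in n_gt0.
Qed.

Section Signs.
Variables (R : realType) (N : nat).
Implicit Types (e : {set 'I_N}).

Definition sgn (i : 'I_N) e : R := 2 * ind i e - 1.
Definition unif e : R := poisson_design (fun=> 2^-1) e.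

Lemma unif_ge0 e : 0 <= unif e.
Proof. by apply: poisson_design_ge0 => i; rewrite invr_ge0 invf_le1 ?ler0n ?ler1n. Qed.

Lemma unif_sum1 : \sum_e unif e = 1.
Proof. exact: poisson_design_sum1. Qed.

Lemma unifE e : unif e = 2^-N.
Proof.
rewrite /unif poisson_designE (eq_bigr (fun=> 2^-1)) ?prodr_const ?card_ord ?exprVn // => i _.
by case: ifP => // _; field.
Qed.

Lemma unif_sgn i : \sum_e unif e * sgn i e = 0.
Proof.
have expand e : unif e * sgn i e = 2 * (unif e * (ind i e - 2^-1)) by rewrite /sgn; field.
by rewrite (eq_bigr _ (fun e _ => expand e)) -mulr_sumr poisson_design_centered mulr0.
Qed.

Lemma unif_orth i j : \sum_e unif e * (sgn i e * sgn j e) = (i == j)%:R.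
Proof.
have expand e : unif e * (sgn i e * sgn j e) =
    4 * (unif e * ((ind i e - 2^-1) * (ind j e - 2^-1))) by rewrite /sgn; field.
by rewrite (eq_bigr _ (fun e _ => expand e)) -mulr_sumr poisson_design_cov; field.
Qed.

Definition flip (i : 'I_N) e : {set 'I_N} := if i \in e then e :\ i else i |: e.

Lemma mem_flip i e j : (j \in flip i e) = if j == i then i \notin e else j \in e.
Proof.
by rewrite /flip; case: eqP => [->|/eqP/negbTE ji]; case: ifP => i_e; rewrite !inE ?eqxx ?i_e ?ji.
Qed.

Lemma flipK i : involutive (flip i).
Proof.
move=> e; apply/setP => j; rewrite !mem_flip.
by case: eqP => [->|//]; rewrite eqxx negbK.
Qed.

Lemma sgn_flip i e : sgn i (flip i e) = - sgn i e.
Proof. by rewrite /sgn /ind mem_flip eqxx; case: (i \in e) => /=; ring. Qed.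

End Signs.
Arguments sgn {R N}.
Arguments unif {R N}.

Section Vertices.
Variables (R : realType) (N : nat) (a b : 'I_N -> R).
Local Notation r := (half_range a b).
Local Notation m := (midpoint a b).
Implicit Types (e s : {set 'I_N}).

(* The corner of Theta with y_i = b_i for i in e and y_i = a_i otherwise. *)
Definition vertex e : 'I_N -> R := fun i => m i + r i * sgn i e.

Lemma vertex_in_Theta e : (forall i, a i <= b i) -> Theta a b (vertex e).
Proof.
move=> ab i; have := ab i; rewrite /vertex /sgn /ind /half_range /midpoint.
by case: (i \in e) => /= ab_i; apply/andP; split; lra.
Qed.

Lemma unif_total_sgn i : \sum_e unif e * (Defs.total (vertex e) * sgn i e) = r i.
Proof.
have orth1 (j k : 'I_N) : \sum_e unif e * (sgn j e * sgn k e) = (j == k)%:R * 1 :> R.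
  by rewrite unif_orth mulr1.
have expand e : unif e * (Defs.total (vertex e) * sgn i e) =
    (\sum_j m j) * (unif e * sgn i e) + unif e * (sgn i e * \sum_j r j * sgn j e).
  by rewrite /Defs.total /vertex big_split /=; ring.
rewrite (eq_bigr _ (fun e _ => expand e)) big_split /= -mulr_sumr unif_sgn mulr0 add0r.
by rewrite (sum_orth_coef _ _ orth1) mulr1.
Qed.

Lemma vertex_flip i e j : j != i -> vertex (flip i e) j = vertex e j.
Proof. by move=> ji; rewrite /vertex /sgn /ind mem_flip (negbTE ji). Qed.

(* Flipping coordinate i permutes the vertices, preserves the uniform weights and, by
   locality, leaves delta s unchanged when i is not in s, but negates sgn i. *)
Lemma local_coef_vertex_out (delta : estimator_fam R N) s i :
  local delta -> i \notin s -> \sum_e unif e * (delta s (vertex e) * sgn i e) = 0.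
Proof.
move=> delta_local i_s; set S := \sum_e _.
suff: S = - S by lra.
rewrite {1}/S (reindex_inj (can_inj (flipK i))) /= -sumrN; apply: eq_bigr => e _.
rewrite sgn_flip !unifE (delta_local s (vertex (flip i e)) (vertex e)); first by ring.
by move=> j j_s; apply: vertex_flip; apply: contraNneq i_s => <-.
Qed.

End Vertices.

Section LowerBound.
Variables (R : realType) (N : nat) (a b : 'I_N -> R).
Variables (p : {ffun {set 'I_N} -> R}) (delta : estimator_fam R N).
Hypotheses (ab : forall i, a i <= b i) (p_design : is_design p)
  (incl_gt0 : forall i, 0 < incl_prob p i) (delta_local : local delta)
  (delta_unbiased : unbiased a b p delta).
Local Notation r := (half_range a b).

Lemma bayes_risk_vertices_ge :
  \sum_i r i ^+ 2 * (1 - incl_prob p i) / incl_prob p i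
  <= \sum_e unif e * risk p delta (vertex a b e).
Proof.
pose coef s i := \sum_e unif e * (delta s (vertex a b e) * sgn i e).
have coef_mean i : \sum_s p s * coef s i = r i.
  rewrite -(unif_total_sgn a b i) /coef; under eq_bigr do rewrite mulr_sumr.
  rewrite exchange_big; apply: eq_bigr => e _ /=.
  rewrite -delta_unbiased; last exact: vertex_in_Theta.
  rewrite mulr_suml mulr_sumr.
  by apply: eq_bigr => s _; ring.
have coef_err s i : \sum_e unif e *
    ((delta s (vertex a b e) - Defs.total (vertex a b e)) * sgn i e) = coef s i - r i.
  by rewrite -(unif_total_sgn a b i) -sumrB; apply: eq_bigr => e _; ring.
have per_unit i : r i ^+ 2 * (1 - incl_prob p i) / incl_prob p i
    <= \sum_s p s * (coef s i - r i) ^+ 2.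
  apply: design_second_moment_ge => // s i_s.
  exact: local_coef_vertex_out.
apply: le_trans (ler_sum _ (fun i _ => per_unit i)) _.
rewrite exchange_big /risk; under [leRHS]eq_bigr do rewrite mulr_sumr.
rewrite [leRHS]exchange_big /=; apply: ler_sum => s _.
rewrite -mulr_sumr; under [leRHS]eq_bigr do rewrite mulrCA.
rewrite -mulr_sumr; apply: ler_wpM2l; first by case: p_design.
under eq_bigr do rewrite -coef_err.
exact: bessel (@unif_ge0 R N) (@unif_orth R N).
Qed.

End LowerBound.

Lemma Vn_le_max_risk (R : realType) (N : nat) (a b : 'I_N -> R) (n : R)
    (p : {ffun {set 'I_N} -> R}) (delta : estimator_fam R N) :
  (forall i, a i <= b i) -> admissible a b n p delta -> (Vn a b n <= max_risk a b p delta)%E.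
Proof.
move=> ab [p_design incl_gt0 size_le [delta_local _] delta_unbiased].
have [e e_worst] := exists_ge_average (fun e => risk p delta (vertex a b e))
  (@unif_ge0 R N) (@unif_sum1 R N).
apply: (@le_trans _ _ (\sum_i half_range a b i ^+ 2 * (1 - incl_prob p i) / incl_prob p i)%:E).
  apply: ereal_inf_lbound; exists (incl_prob p) => //; split; last by rewrite -exp_sizeE.
  by move=> i; rewrite incl_gt0 incl_prob_le1.
apply: (@le_trans _ _ (risk p delta (vertex a b e))%:E).
  by rewrite lee_fin; apply: le_trans e_worst; apply: bayes_risk_vertices_ge.
by apply: ereal_sup_ubound; exists (vertex a b e) => //; apply: vertex_in_Theta.
Qed.

Lemma min_allocation_design_optimal (R : realType) (N : nat) (a b : 'I_N -> R) (c n : R) :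
  (forall i, a i <= b i) -> (forall i, 0 < half_range a b i) -> 0 < c ->
  \sum_i Num.min 1 (c * half_range a b i) = n ->
  let pistar := fun i => Num.min 1 (c * half_range a b i) in
  admissible a b n (poisson_design pistar) (diff_estimator (midpoint a b) pistar) /\
  max_risk a b (poisson_design pistar) (diff_estimator (midpoint a b) pistar) = Vn a b n.
Proof.
move=> ab r_gt0 c_gt0 sum_c pistar.
have pistar01 i : 0 < pistar i <= 1 by apply: min1_gt0_le1; rewrite mulr_gt0.
have pistar_neq0 i : pistar i != 0 by case/andP: (pistar01 i) => pi_gt0 _; rewrite gt_eqF.
split; last by rewrite max_risk_diff_estimator // (VnE r_gt0 c_gt0 sum_c).
split.
- by apply: poisson_design_is_design => i; case/andP: (pistar01 i) => /ltW -> ->.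
- by move=> i; rewrite incl_prob_poisson; case/andP: (pistar01 i).
- by rewrite exp_size_poisson sum_c.
- exact: diff_estimator_is_estimator.
- by move=> y _; apply: diff_estimator_unbiased.
Qed.

Lemma minimax_value_le_max_risk (R : realType) (N : nat) (a b : 'I_N -> R) (n : R)
    (p : {ffun {set 'I_N} -> R}) (delta : estimator_fam R N) :
  admissible a b n p delta -> (minimax_value a b n <= max_risk a b p delta)%E.
Proof. by move=> adm; apply: ereal_inf_lbound; exists (p, delta). Qed.

Lemma Vn_le_minimax_value (R : realType) (N : nat) (a b : 'I_N -> R) (n : R) :
  (forall i, a i <= b i) -> (Vn a b n <= minimax_value a b n)%E.
Proof.
by move=> ab; apply: le_ereal_inf_tmp => _ [[p delta] adm <-]; apply: Vn_le_max_risk.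
Qed.

Theorem theorem3 (R : realType) (N : nat) (a b : 'I_N -> R) (n : nat)
  (HN : (1 <= N)%N)
  (Hab : forall i, a i <= b i)
  (Hr : forall i, 0 < half_range a b i)
  (Hn : (0 < n < N)%N) :
  minimax_value a b n%:R = Vn a b n%:R /\
  (exists c : R, 0 < c /\
     \sum_(i < N) Num.min 1 (c * half_range a b i) = n%:R) /\
  (forall c : R, 0 < c ->
     \sum_(i < N) Num.min 1 (c * half_range a b i) = n%:R ->
     let pistar := fun i => Num.min 1 (c * half_range a b i) in
     admissible a b n%:R (poisson_design pistar)
       (diff_estimator (midpoint a b) pistar) /\
     max_risk a b (poisson_design pistar)
       (diff_estimator (midpoint a b) pistar) = Vn a b n%:R).
Proof.
have [c c_gt0 sum_c] := exists_allocation_scale Hr Hn.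
have optimal := min_allocation_design_optimal Hab Hr.
split; last by split=> [|c' c'_gt0 sum_c']; [exists c | exact: optimal].
have [adm max_risk_eq] := optimal _ _ c_gt0 sum_c.
apply/le_anti/andP; split; last exact: Vn_le_minimax_value.
by rewrite -max_risk_eq; apply: minimax_value_le_max_risk.
Qed.
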